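(* Let $\alpha<\beta$ with $\alpha+\beta>0$. As $\tau\to\infty$: (i) $\lim \tau I_2=\int_{-\alpha}^{\beta}\frac{1}{\sqrt{\zeta^2+4}}\sqrt{\frac{\alpha+\zeta}{\beta-\zeta}}\,d\zeta$ and $\lim\tau J_2=\int_{-\alpha}^{\beta}\frac{1}{\sqrt{\zeta^2+4}}\sqrt{\frac{\beta-\zeta}{\alpha+\zeta}}\,d\zeta$, and $\lim_{\tau\to\infty}\tau I_2<\lim_{\tau\to\infty}\tau J_2$; (ii) $\lim\tau(I_1-J_1)=-\int_{-\infty}^{-\alpha}\frac{\alpha+\beta}{\sqrt{\zeta^2+4}\sqrt{\beta-\zeta}\sqrt{-\alpha-\zeta}}\,d\zeta$ and $\lim\tau(I_3-J_3)=\int_{\beta}^{\infty}\frac{\alpha+\beta}{\sqrt{\zeta^2+4}\sqrt{\zeta-\beta}\sqrt{\zeta+\alpha}}\,d\zeta$, both finite and nonzero; (iii) $\tau(J_1+J_3)\to+\infty$.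
   Context: For real $\alpha,\beta,\tau$ with $-\tau<-\alpha<\beta<\tau$ put $g_1(\zeta)=|\zeta+\alpha|^{1/2}|\zeta-\beta|^{-1/2}(\tau^2-\zeta^2)^{-1/2}(\zeta^2+4)^{-1/2}$ and $g_2(\zeta)=|\zeta+\alpha|^{-1/2}|\zeta-\beta|^{1/2}(\tau^2-\zeta^2)^{-1/2}(\zeta^2+4)^{-1/2}$, and $I_1=\int_{-\tau}^{-\alpha}g_1$, $I_2=\int_{-\alpha}^{\beta}g_1$, $I_3=\int_{\beta}^{\tau}g_1$, $J_1,J_2,J_3$ likewise with $g_2$ (convergent improper integrals). Under $\alpha=a-1/a$, $\beta=b-1/b$, $\tau=t-1/t$ these coincide with the period integrals of the surfaces in class $\mathcal O$ with parameters $a,b,t$. *)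

From Stdlib Require Export Reals Lra.
Open Scope R_scope.

Definition improper_int (f : R -> R) (a b L : R) : Prop :=
  (forall c d, a < c -> c <= d -> d < b -> inhabited (Riemann_integrable f c d)) /\
  forall eps, eps > 0 -> exists delta, delta > 0 /\
    forall c d (pr : Riemann_integrable f c d),
      a < c -> c < a + delta -> b - delta < d -> d < b -> c <= d ->
      Rabs (RiemannInt pr - L) < eps.

Definition improper_int_ninf (f : R -> R) (b L : R) : Prop :=
  (forall c d, c <= d -> d < b -> inhabited (Riemann_integrable f c d)) /\
  forall eps, eps > 0 -> exists M delta, delta > 0 /\
    forall c d (pr : Riemann_integrable f c d),
      c < M -> b - delta < d -> d < b -> c <= d ->
      Rabs (RiemannInt pr - L) < eps.

Definition improper_int_pinf (f : R -> R) (a L : R) : Prop :=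
  (forall c d, a < c -> c <= d -> inhabited (Riemann_integrable f c d)) /\
  forall eps, eps > 0 -> exists M delta, delta > 0 /\
    forall c d (pr : Riemann_integrable f c d),
      a < c -> c < a + delta -> M < d -> c <= d ->
      Rabs (RiemannInt pr - L) < eps.

Definition tends_at_pinf (F : R -> R) (L : R) : Prop :=
  forall eps, eps > 0 -> exists T, forall x, x > T -> Rabs (F x - L) < eps.

Definition diverges_pinf (F : R -> R) : Prop :=
  forall M, exists T, forall x, x > T -> F x > M.

Definition g1 (alpha beta tau z : R) : R :=
  sqrt (Rabs (z + alpha)) / sqrt (Rabs (z - beta))
  / sqrt (tau ^ 2 - z ^ 2) / sqrt (z ^ 2 + 4).

Definition g2 (alpha beta tau z : R) : R :=
  sqrt (Rabs (z - beta)) / sqrt (Rabs (z + alpha))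
  / sqrt (tau ^ 2 - z ^ 2) / sqrt (z ^ 2 + 4).

From Stdlib Require Import Reals Lra Classical.
From Coquelicot Require Import Coquelicot.
Open Scope R_scope.
Implicit Types f g : R -> R.

(* On (-alpha, beta) the weight tau / sqrt (tau^2 - z^2) tends to 1 uniformly, so tau I2 and
   tau J2 converge to the integrals of the tau-free parts of g1 and g2; pairing each point of the
   left half of (-alpha, beta) with its mirror image shows that the second integral is larger.
   Outside [-alpha, beta] the difference g1 - g2 is (alpha + beta) / (sqrt (z^2 + 4)
   sqrt |z - beta| sqrt |z + alpha|) times the weight 1 / sqrt (tau^2 - z^2); this kernel decays
   like |z|^(-2), and replacing tau times the weight by 1 costs O(tau^(-3/2)) against integrable
   singularities at both ends, so tau (I3 - J3) and tau (I1 - J1) converge.  Finally, on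
   (-tau/2, -|alpha| - 1) one has tau g2 >= 1 / (2 - z), so tau J1 grows at least like ln tau. *)

Definition is_improper_RInt f (a b L : R) : Prop :=
  (forall c d, a < c -> c <= d -> d < b -> ex_RInt f c d) /\
  forall eps, eps > 0 -> exists delta, delta > 0 /\
    forall c d, a < c -> c < a + delta -> b - delta < d -> d < b -> c <= d ->
      Rabs (RInt f c d - L) < eps.

Definition is_improper_RInt_pinf f (a L : R) : Prop :=
  (forall c d, a < c -> c <= d -> ex_RInt f c d) /\
  forall eps, eps > 0 -> exists M delta, delta > 0 /\
    forall c d, a < c -> c < a + delta -> M < d -> c <= d ->
      Rabs (RInt f c d - L) < eps.

Lemma is_improper_RInt_of_improper_int f a b L :
  improper_int f a b L -> is_improper_RInt f a b L.
Proof.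
  intros [Hex Hlim]; split.
  - intros c d hc hcd hd; destruct (Hex c d hc hcd hd) as [pr].
    now apply ex_RInt_Reals_1.
  - intros eps Heps; destruct (Hlim eps Heps) as [delta [Hdelta H]].
    exists delta; split; auto.
    intros c d hc hc' hd' hd hcd; destruct (Hex c d hc hcd hd) as [pr].
    rewrite (RInt_Reals f c d pr); now apply H.
Qed.

Lemma improper_int_of_is_improper_RInt f a b L :
  is_improper_RInt f a b L -> improper_int f a b L.
Proof.
  intros [Hex Hlim]; split.
  - intros c d hc hcd hd; constructor; now apply ex_RInt_Reals_0, Hex.
  - intros eps Heps; destruct (Hlim eps Heps) as [delta [Hdelta H]].
    exists delta; split; auto.
    intros c d pr hc hc' hd' hd hcd; rewrite <- (RInt_Reals f c d pr); now apply H.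
Qed.

Lemma improper_int_pinf_of_is_improper_RInt_pinf f a L :
  is_improper_RInt_pinf f a L -> improper_int_pinf f a L.
Proof.
  intros [Hex Hlim]; split.
  - intros c d hc hcd; constructor; now apply ex_RInt_Reals_0, Hex.
  - intros eps Heps; destruct (Hlim eps Heps) as [M [delta [Hdelta H]]].
    exists M, delta; split; auto.
    intros c d pr hc hc' hd hcd; rewrite <- (RInt_Reals f c d pr); now apply H.
Qed.

Lemma Rabs_lt_between x L e : Rabs (x - L) < e <-> L - e < x < L + e.
Proof. split; intros H; [apply Rabs_def2 in H | apply Rabs_def1]; lra. Qed.

Lemma ex_RInt_scalR f a b k : ex_RInt f a b -> ex_RInt (fun x => k * f x) a b.
Proof. exact (ex_RInt_scal (V := R_CompleteNormedModule) f a b k). Qed.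

Lemma RInt_scalR f a b k : ex_RInt f a b -> RInt (fun x => k * f x) a b = k * RInt f a b.
Proof. exact (RInt_scal (V := R_CompleteNormedModule) f a b k). Qed.

Lemma ex_RInt_plusR f g a b :
  ex_RInt f a b -> ex_RInt g a b -> ex_RInt (fun x => f x + g x) a b.
Proof. exact (ex_RInt_plus (V := R_CompleteNormedModule) f g a b). Qed.

Lemma RInt_plusR f g a b : ex_RInt f a b -> ex_RInt g a b ->
  RInt (fun x => f x + g x) a b = RInt f a b + RInt g a b.
Proof. exact (RInt_plus (V := R_CompleteNormedModule) f g a b). Qed.

Lemma ex_RInt_minusR f g a b :
  ex_RInt f a b -> ex_RInt g a b -> ex_RInt (fun x => f x - g x) a b.
Proof. exact (ex_RInt_minus (V := R_CompleteNormedModule) f g a b). Qed.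

Lemma RInt_minusR f g a b : ex_RInt f a b -> ex_RInt g a b ->
  RInt (fun x => f x - g x) a b = RInt f a b - RInt g a b.
Proof. exact (RInt_minus (V := R_CompleteNormedModule) f g a b). Qed.

Lemma RInt_zeroR a b : RInt (fun _ => 0) a b = 0.
Proof.
  rewrite (RInt_const (V := R_CompleteNormedModule)).
  exact (scal_zero_r (K := R_Ring) (V := R_ModuleSpace) _).
Qed.

Lemma RInt_pointR f a : RInt f a a = 0.
Proof. exact (RInt_point (V := R_CompleteNormedModule) a f). Qed.

Lemma ex_RInt_continuous_on f c d :
  c <= d -> (forall x, c <= x <= d -> continuous f x) -> ex_RInt f c d.
Proof.
  intros hcd Hf; apply (ex_RInt_continuous (V := R_CompleteNormedModule)).
  intros x Hx; rewrite Rmin_left, Rmax_right in Hx by lra; now apply Hf.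
Qed.

Lemma continuous_of_ex_derive f x : ex_derive f x -> continuous f x.
Proof. exact (ex_derive_continuous (K := R_AbsRing) (V := R_NormedModule) f x). Qed.

Lemma RInt_derive_on (F : R -> R) f c d :
  c <= d -> (forall x, c <= x <= d -> is_derive F x (f x) /\ continuous f x) ->
  ex_RInt f c d /\ RInt f c d = F d - F c.
Proof.
  intros hcd HF.
  assert (H : is_RInt f c d (minus (F d) (F c))).
  { apply (is_RInt_derive (V := R_CompleteNormedModule)); intros x Hx; rewrite Rmin_left, Rmax_right in Hx by lra;
      now apply HF. }
  split; [eexists; exact H | exact (is_RInt_unique (V := R_CompleteNormedModule) _ _ _ _ H)].
Qed.

Lemma RInt_Chasles_le f c d c' d' :
  c' <= c -> c <= d -> d <= d' -> ex_RInt f c' d' ->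
  (forall x, c' < x < d' -> 0 <= f x) -> RInt f c d <= RInt f c' d'.
Proof.
  intros h1 h2 h3 He Hf.
  assert (e1 : ex_RInt f c' d) by (apply (ex_RInt_Chasles_1 f c' d d'); auto; lra).
  assert (e2 : ex_RInt f c d) by (apply (ex_RInt_Chasles_2 f c' c d); auto; lra).
  assert (e3 : ex_RInt f d d') by (apply (ex_RInt_Chasles_2 f c' d d'); auto; lra).
  assert (e4 : ex_RInt f c' c) by (apply (ex_RInt_Chasles_1 f c' c d); auto; lra).
  rewrite <- (RInt_Chasles f c' d d'), <- (RInt_Chasles f c' c d) by auto.
  assert (0 <= RInt f c' c) by (apply RInt_ge_0; auto; intros; apply Hf; lra).
  assert (0 <= RInt f d d') by (apply RInt_ge_0; auto; intros; apply Hf; lra).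
  change (RInt f c d <= RInt f c' c + RInt f c d + RInt f d d'); lra.
Qed.

Lemma RInt_reflect f w c d : ex_RInt f (w - d) (w - c) ->
  ex_RInt (fun y => f (w - y)) c d /\ RInt (fun y => f (w - y)) c d = RInt f (w - d) (w - c).
Proof.
  intros H. apply ex_RInt_swap in H; destruct H as [l Hl].
  assert (Hlin : is_RInt f ((-1) * c + w) ((-1) * d + w) l).
  { now replace ((-1) * c + w) with (w - c) by ring; replace ((-1) * d + w) with (w - d) by ring. }
  assert (K : is_RInt (fun y => f (w - y)) c d (opp l)).
  { apply is_RInt_comp_lin, is_RInt_opp in Hlin.
    refine (is_RInt_ext _ _ _ _ _ _ Hlin); intros x _.
    replace ((-1) * x + w) with (w - x) by ring.
    unfold scal, opp; simpl; unfold mult; simpl; unfold opp; simpl; ring. }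
  split; [exists (opp l); exact K|].
  rewrite (is_RInt_unique _ _ _ _ K); symmetry.
  apply is_RInt_unique, is_RInt_swap, Hl.
Qed.

Lemma RInt_opp_arg f c d : ex_RInt f (- d) (- c) ->
  ex_RInt (fun y => f (- y)) c d /\ RInt (fun y => f (- y)) c d = RInt f (- d) (- c).
Proof.
  intros H. destruct (RInt_reflect f 0 c d) as [He Heq].
  { now replace (0 - d) with (- d) by ring; replace (0 - c) with (- c) by ring. }
  replace (0 - d) with (- d) in Heq by ring; replace (0 - c) with (- c) in Heq by ring.
  assert (E : forall y, f (0 - y) = f (- y)) by (intros y; f_equal; ring).
  split; [eapply ex_RInt_ext; [intros; apply E | exact He]|].
  rewrite <- Heq; apply RInt_ext; intros; now rewrite E.
Qed.

Lemma in_open_interval c d x : c <= d -> Rmin c d < x < Rmax c d -> c < x < d.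
Proof. intros h H; rewrite Rmin_left, Rmax_right in H by lra; lra. Qed.

Section ImproperIntegral.

Variables (f : R -> R) (a b : R).

Lemma RInt_le_improper L c d : (forall x, a < x < b -> 0 <= f x) ->
  is_improper_RInt f a b L -> a < c -> c <= d -> d < b -> RInt f c d <= L.
Proof.
  intros Hf [Hex Hlim] hc hcd hd.
  destruct (Rle_or_lt (RInt f c d) L) as [|Hlt]; auto.
  destruct (Hlim (RInt f c d - L)) as [delta [Hdelta H]]; [lra|].
  set (c' := a + Rmin (c - a) delta / 2); set (d' := b - Rmin (b - d) delta / 2).
  pose proof (Rmin_l (c - a) delta); pose proof (Rmin_r (c - a) delta).
  pose proof (Rmin_l (b - d) delta); pose proof (Rmin_r (b - d) delta).
  assert (0 < Rmin (c - a) delta) by (apply Rmin_glb_lt; lra).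
  assert (0 < Rmin (b - d) delta) by (apply Rmin_glb_lt; lra).
  assert (RInt f c d <= RInt f c' d').
  { apply RInt_Chasles_le; unfold c', d'; try lra; [apply Hex; lra | intros; apply Hf; lra]. }
  assert (K : Rabs (RInt f c' d' - L) < RInt f c d - L) by (apply H; unfold c', d'; lra).
  rewrite Rabs_lt_between in K; lra.
Qed.

Lemma improper_le_of_RInt_le L B : a < b -> is_improper_RInt f a b L ->
  (forall c d, a < c -> c <= d -> d < b -> RInt f c d <= B) -> L <= B.
Proof.
  intros hab [_ Hlim] HB.
  destruct (Rle_or_lt L B) as [|Hlt]; auto.
  destruct (Hlim (L - B)) as [delta [Hdelta H]]; [lra|].
  pose proof (Rmin_l delta (b - a)); pose proof (Rmin_r delta (b - a)).
  assert (0 < Rmin delta (b - a)) by (apply Rmin_glb_lt; lra).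
  set (m := Rmin delta (b - a)) in *.
  assert (K := H (a + m / 3) (b - m / 3)); rewrite Rabs_lt_between in K.
  assert (RInt f (a + m / 3) (b - m / 3) <= B) by (apply HB; lra).
  lra.
Qed.

(* The limit is the supremum of the integrals over inner intervals. *)
Lemma is_improper_RInt_of_bounded B : a < b ->
  (forall c d, a < c -> c <= d -> d < b -> ex_RInt f c d) ->
  (forall x, a < x < b -> 0 <= f x) ->
  (forall c d, a < c -> c <= d -> d < b -> RInt f c d <= B) ->
  exists L, is_improper_RInt f a b L.
Proof.
  intros hab Hex Hf HB.
  set (E := fun y => exists c d, a < c /\ c <= d /\ d < b /\ y = RInt f c d).
  assert (HE : bound E) by (exists B; intros y [c [d [? [? [? ->]]]]]; now apply HB).
  assert (Hne : exists y, E y) by (exists (RInt f ((a + b) / 2) ((a + b) / 2));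
    exists ((a + b) / 2), ((a + b) / 2); repeat split; lra).
  destruct (completeness E HE Hne) as [L [Hub Hlub]].
  exists L; split; auto; intros eps Heps.
  assert (Hy : exists y, E y /\ L - eps < y).
  { apply NNPP; intro Hno; enough (L <= L - eps) by lra.
    apply Hlub; intros y Hy; destruct (Rle_or_lt y (L - eps)); auto.
    exfalso; apply Hno; now exists y. }
  destruct Hy as [y [[c0 [d0 [h1 [h2 [h3 ->]]]]] Hy]].
  exists (Rmin (c0 - a) (b - d0)); split; [apply Rmin_glb_lt; lra|].
  intros c d k1 k2 k3 k4 k5.
  pose proof (Rmin_l (c0 - a) (b - d0)); pose proof (Rmin_r (c0 - a) (b - d0)).
  assert (RInt f c0 d0 <= RInt f c d).
  { apply RInt_Chasles_le; try lra; [apply Hex; lra | intros; apply Hf; lra]. }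
  assert (RInt f c d <= L) by (apply Hub; exists c, d; repeat split; auto).
  apply Rabs_lt_between; lra.
Qed.

Lemma is_improper_RInt_ext g L : (forall x, a < x < b -> f x = g x) ->
  is_improper_RInt f a b L -> is_improper_RInt g a b L.
Proof.
  intros E [Hex Hlim]; split.
  - intros c d h1 h2 h3; eapply ex_RInt_ext; [| apply Hex; eauto].
    intros x Hx; apply in_open_interval in Hx; auto; apply E; lra.
  - intros eps Heps; destruct (Hlim eps Heps) as [delta [Hdelta H]].
    exists delta; split; auto; intros c d k1 k2 k3 k4 k5.
    rewrite <- (RInt_ext f g); [now apply H|].
    intros x Hx; apply in_open_interval in Hx; auto; apply E; lra.
Qed.

Lemma is_improper_RInt_scal L k :
  is_improper_RInt f a b L -> is_improper_RInt (fun x => k * f x) a b (k * L).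
Proof.
  intros [Hex Hlim]; split.
  - intros c d h1 h2 h3; now apply ex_RInt_scalR, Hex.
  - intros eps Heps; pose proof (Rabs_pos k) as Hk.
    destruct (Hlim (eps / (Rabs k + 1))) as [delta [Hdelta H]];
      [apply Rdiv_lt_0_compat; lra|].
    exists delta; split; auto; intros c d k1 k2 k3 k4 k5.
    rewrite RInt_scalR by now apply Hex.
    rewrite <- Rmult_minus_distr_l, Rabs_mult.
    specialize (H c d k1 k2 k3 k4 k5); pose proof (Rabs_pos (RInt f c d - L)).
    apply Rmult_lt_compat_l with (r := Rabs k + 1) in H; [|lra].
    replace ((Rabs k + 1) * (eps / (Rabs k + 1))) with eps in H by (field; lra).
    nra.
Qed.

Lemma is_improper_RInt_minus g L M :
  is_improper_RInt f a b L -> is_improper_RInt g a b M ->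
  is_improper_RInt (fun x => f x - g x) a b (L - M).
Proof.
  intros [Hex Hlim] [Gex Glim]; split.
  - intros c d h1 h2 h3; apply ex_RInt_minusR; auto.
  - intros eps Heps.
    destruct (Hlim (eps / 2)) as [d1 [Hd1 H]]; [lra|].
    destruct (Glim (eps / 2)) as [d2 [Hd2 G]]; [lra|].
    exists (Rmin d1 d2); split; [apply Rmin_glb_lt; lra|].
    pose proof (Rmin_l d1 d2); pose proof (Rmin_r d1 d2).
    intros c d k1 k2 k3 k4 k5; rewrite RInt_minusR by auto.
    assert (A1 := H c d k1 ltac:(lra) ltac:(lra) k4 k5).
    assert (A2 := G c d k1 ltac:(lra) ltac:(lra) k4 k5).
    rewrite Rabs_lt_between in A1, A2 |- *; lra.
Qed.

Lemma is_improper_RInt_opp_arg L :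
  is_improper_RInt f a b L -> is_improper_RInt (fun x => f (- x)) (- b) (- a) L.
Proof.
  intros [Hex Hlim]; split.
  - intros c d h1 h2 h3; apply RInt_opp_arg, Hex; lra.
  - intros eps Heps; destruct (Hlim eps Heps) as [delta [Hdelta H]].
    exists delta; split; auto; intros c d k1 k2 k3 k4 k5.
    rewrite (proj2 (RInt_opp_arg f c d ltac:(apply Hex; lra))); apply H; lra.
Qed.

End ImproperIntegral.

Lemma is_improper_RInt_le f g a b L M : a < b ->
  (forall x, a < x < b -> 0 <= f x <= g x) ->
  is_improper_RInt f a b L -> is_improper_RInt g a b M -> L <= M.
Proof.
  intros hab Hfg HL HM.
  apply (improper_le_of_RInt_le f a b L M hab HL); intros c d h1 h2 h3.
  apply Rle_trans with (RInt g c d).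
  - apply RInt_le; auto; [apply HL | apply HM | intros; apply Hfg]; lra.
  - apply (RInt_le_improper g a b); auto; intros x Hx; specialize (Hfg x Hx); lra.
Qed.

Lemma is_improper_RInt_dominated f g a b M : a < b ->
  (forall c d, a < c -> c <= d -> d < b -> ex_RInt f c d) ->
  (forall x, a < x < b -> 0 <= f x <= g x) ->
  is_improper_RInt g a b M -> exists L, is_improper_RInt f a b L.
Proof.
  intros hab Hex Hfg HM; apply (is_improper_RInt_of_bounded f a b M); auto.
  - intros x Hx; apply Hfg, Hx.
  - intros c d h1 h2 h3; apply Rle_trans with (RInt g c d).
    + apply RInt_le; auto; [apply HM | intros; apply Hfg]; lra.
    + apply (RInt_le_improper g a b); auto; intros x Hx; specialize (Hfg x Hx); lra.
Qed.

Section ImproperIntegralPinf.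

Variables (f : R -> R) (a : R).

Lemma RInt_le_improper_pinf L c d : (forall x, a < x -> 0 <= f x) ->
  is_improper_RInt_pinf f a L -> a < c -> c <= d -> RInt f c d <= L.
Proof.
  intros Hf [Hex Hlim] hc hcd.
  destruct (Rle_or_lt (RInt f c d) L) as [|Hlt]; auto.
  destruct (Hlim (RInt f c d - L)) as [M [delta [Hdelta H]]]; [lra|].
  pose proof (Rmin_l (c - a) delta); pose proof (Rmin_r (c - a) delta).
  pose proof (Rmax_l d M); pose proof (Rmax_r d M).
  assert (0 < Rmin (c - a) delta) by (apply Rmin_glb_lt; lra).
  set (c' := a + Rmin (c - a) delta / 2); set (d' := Rmax d M + 1).
  assert (RInt f c d <= RInt f c' d').
  { apply RInt_Chasles_le; unfold c', d'; try lra; [apply Hex; lra | intros; apply Hf; lra]. }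
  assert (K : Rabs (RInt f c' d' - L) < RInt f c d - L) by (apply H; unfold c', d'; lra).
  rewrite Rabs_lt_between in K; lra.
Qed.

Lemma is_improper_RInt_pinf_of_bounded B :
  (forall c d, a < c -> c <= d -> ex_RInt f c d) ->
  (forall x, a < x -> 0 <= f x) ->
  (forall c d, a < c -> c <= d -> RInt f c d <= B) ->
  exists L, is_improper_RInt_pinf f a L.
Proof.
  intros Hex Hf HB.
  set (E := fun y => exists c d, a < c /\ c <= d /\ y = RInt f c d).
  assert (HE : bound E) by (exists B; intros y [c [d [? [? ->]]]]; now apply HB).
  assert (Hne : exists y, E y) by (exists (RInt f (a + 1) (a + 1));
    exists (a + 1), (a + 1); repeat split; lra).
  destruct (completeness E HE Hne) as [L [Hub Hlub]].
  exists L; split; auto; intros eps Heps.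
  assert (Hy : exists y, E y /\ L - eps < y).
  { apply NNPP; intro Hno; enough (L <= L - eps) by lra.
    apply Hlub; intros y Hy; destruct (Rle_or_lt y (L - eps)); auto.
    exfalso; apply Hno; now exists y. }
  destruct Hy as [y [[c0 [d0 [h1 [h2 ->]]]] Hy]].
  exists d0, (c0 - a); split; [lra|]; intros c d k1 k2 k3 k4.
  assert (RInt f c0 d0 <= RInt f c d).
  { apply RInt_Chasles_le; try lra; [apply Hex; lra | intros; apply Hf; lra]. }
  assert (RInt f c d <= L) by (apply Hub; exists c, d; repeat split; auto).
  apply Rabs_lt_between; lra.
Qed.

End ImproperIntegralPinf.

Lemma improper_int_ninf_of_pinf_opp_arg f g a L : is_improper_RInt_pinf f a L ->
  (forall z, z < - a -> g z = f (- z)) -> improper_int_ninf g (- a) L.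
Proof.
  intros [Hex Hlim] Hg.
  assert (E : forall c d, c <= d -> d < - a ->
            ex_RInt g c d /\ RInt g c d = RInt f (- d) (- c)).
  { intros c d h1 h2; destruct (RInt_opp_arg f c d) as [He Heq]; [apply Hex; lra|].
    assert (Ext : forall x, Rmin c d < x < Rmax c d -> f (- x) = g x).
    { intros x Hx; apply in_open_interval in Hx; auto; symmetry; apply Hg; lra. }
    split; [eapply ex_RInt_ext; [exact Ext | exact He]|].
    rewrite <- Heq; symmetry; now apply RInt_ext. }
  split.
  - intros c d h1 h2; constructor; now apply ex_RInt_Reals_0, E.
  - intros eps Heps; destruct (Hlim eps Heps) as [M [delta [Hdelta H]]].
    exists (- M), delta; split; auto; intros c d pr h1 h2 h3 h4.
    rewrite <- (RInt_Reals g c d pr), (proj2 (E c d h4 h3)); apply H; lra.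
Qed.

Lemma chord_weight_bounds K tau z : 0 < tau -> K < tau ^ 2 -> z ^ 2 <= K ->
  1 <= tau / sqrt (tau ^ 2 - z ^ 2) <= tau / sqrt (tau ^ 2 - K).
Proof.
  intros htau hK hz.
  assert (pK : 0 < sqrt (tau ^ 2 - K)) by (apply sqrt_lt_R0; lra).
  assert (hKS : sqrt (tau ^ 2 - K) <= sqrt (tau ^ 2 - z ^ 2)) by (apply sqrt_le_1; lra).
  assert (hSt : sqrt (tau ^ 2 - z ^ 2) <= tau).
  { pose proof (pow2_ge_0 z); apply Rle_trans with (sqrt (tau ^ 2)).
    - apply sqrt_le_1; lra.
    - rewrite sqrt_pow2; lra. }
  split.
  - apply Rmult_le_reg_r with (sqrt (tau ^ 2 - z ^ 2)); [lra|].
    unfold Rdiv; rewrite Rmult_assoc, Rinv_l; lra.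
  - apply Rmult_le_compat_l; [lra|]; apply Rinv_le_contravar; lra.
Qed.

Lemma tends_chord_ratio K : 0 <= K -> tends_at_pinf (fun t => t / sqrt (t ^ 2 - K)) 1.
Proof.
  intros hK eps Heps; exists (K + 2 + 2 * K / eps); intros t ht.
  assert (0 <= 2 * K / eps) by (apply Rdiv_le_0_compat; lra).
  assert (hKt : 2 * K < eps * t).
  { apply Rmult_lt_reg_r with (/ eps); [now apply Rinv_0_lt_compat|].
    replace (2 * K * / eps) with (2 * K / eps) by reflexivity.
    replace (eps * t * / eps) with t by (field; lra); lra. }
  set (S := sqrt (t ^ 2 - K)).
  assert (eS : S * S = t ^ 2 - K) by (apply sqrt_sqrt; nra).
  assert (pS : 0 < S) by (apply sqrt_lt_R0; nra).
  assert (hS : t / 2 <= S <= t) by (split; nra).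
  (* t - S = K / (t + S) *)
  assert (hdiff : t * (t - S) <= K) by nra.
  apply Rabs_lt_between; split.
  - assert (1 <= t / S); [|lra].
    apply Rmult_le_reg_r with S; [lra|]; unfold Rdiv; rewrite Rmult_assoc, Rinv_l; lra.
  - apply Rmult_lt_reg_r with S; [lra|]; unfold Rdiv; rewrite Rmult_assoc, Rinv_l by lra.
    nra.
Qed.

Lemma tends_at_pinf_squeeze_scaled G c L T : 0 <= L -> tends_at_pinf c 1 ->
  (forall t, T < t -> L <= G t <= c t * L) -> tends_at_pinf G L.
Proof.
  intros hL Hc HG eps Heps.
  destruct (Hc (eps / (L + 1))) as [T' HT']; [apply Rdiv_lt_0_compat; lra|].
  exists (Rmax T T'); intros t ht.
  pose proof (Rmax_l T T'); pose proof (Rmax_r T T').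
  specialize (HG t ltac:(lra)); specialize (HT' t ltac:(lra)).
  rewrite Rabs_lt_between in HT' |- *.
  assert (eps / (L + 1) * L < eps).
  { apply Rmult_lt_reg_r with (L + 1); [lra|].
    replace (eps / (L + 1) * L * (L + 1)) with (eps * L) by (field; lra); nra. }
  assert ((c t - 1) * L <= eps / (L + 1) * L) by (apply Rmult_le_compat_r; lra).
  lra.
Qed.

Lemma tends_scaled_chord_integral f a b K T0 F :
  a < b -> 0 <= K -> 0 < T0 -> K < T0 ^ 2 ->
  (forall z, a < z < b -> z ^ 2 <= K) ->
  (forall c d, a < c -> c <= d -> d < b -> ex_RInt f c d) ->
  (forall z, a < z < b -> 0 <= f z) ->
  (forall tau, T0 < tau ->
     is_improper_RInt (fun z => f z / sqrt (tau ^ 2 - z ^ 2)) a b (F tau)) ->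
  exists L, is_improper_RInt f a b L /\ tends_at_pinf (fun tau => tau * F tau) L.
Proof.
  intros hab hK hT0 hKT0 Hz Hex Hf HF.
  set (w := fun tau => tau / sqrt (tau ^ 2 - K)).
  assert (Hw : forall tau z, T0 < tau -> a < z < b ->
    0 <= f z <= tau * (f z / sqrt (tau ^ 2 - z ^ 2)) /\
    tau * (f z / sqrt (tau ^ 2 - z ^ 2)) <= w tau * f z).
  { intros tau z htau hz; pose proof (Hf z hz).
    assert (hK' : K < tau ^ 2) by nra.
    destruct (chord_weight_bounds K tau z ltac:(lra) hK' (Hz z hz)).
    replace (tau * (f z / sqrt (tau ^ 2 - z ^ 2)))
      with (tau / sqrt (tau ^ 2 - z ^ 2) * f z) by (unfold Rdiv; ring).
    unfold w; split; [split|]; nra. }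
  destruct (is_improper_RInt_dominated f (fun z => (T0 + 1) * (f z / sqrt ((T0 + 1) ^ 2 - z ^ 2)))
              a b ((T0 + 1) * F (T0 + 1))) as [L HL]; auto.
  { intros z hz; apply (Hw (T0 + 1) z); lra. }
  { apply is_improper_RInt_scal, HF; lra. }
  exists L; split; auto.
  apply (tends_at_pinf_squeeze_scaled _ w L T0).
  - rewrite <- (RInt_pointR f ((a + b) / 2)).
    apply (RInt_le_improper f a b); auto; lra.
  - apply tends_chord_ratio, hK.
  - intros tau htau; split.
    + apply (is_improper_RInt_le f (fun z => tau * (f z / sqrt (tau ^ 2 - z ^ 2))) a b); auto.
      * intros z hz; apply (Hw tau z htau hz).
      * now apply is_improper_RInt_scal, HF.
    + rewrite (Rmult_comm (w tau)).
      apply (is_improper_RInt_le (fun z => tau * (f z / sqrt (tau ^ 2 - z ^ 2)))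
               (fun z => w tau * f z) a b); auto.
      * intros z hz; destruct (Hw tau z htau hz) as [[] ?]; split; lra.
      * now apply is_improper_RInt_scal, HF.
      * rewrite Rmult_comm; now apply is_improper_RInt_scal.
Qed.

Definition tail_kernel (q p z : R) : R :=
  (q + p) / (sqrt (z ^ 2 + 4) * sqrt (z - q) * sqrt (z + p)).

Section TailKernel.

Variables (q p : R).
Hypothesis hqp : q + p > 0.

Lemma tail_kernel_pos z : q < z -> 0 < tail_kernel q p z.
Proof.
  intros hz; unfold tail_kernel.
  assert (0 < sqrt (z ^ 2 + 4)) by (apply sqrt_lt_R0; pose proof (pow2_ge_0 z); lra).
  assert (0 < sqrt (z - q)) by (apply sqrt_lt_R0; lra).
  assert (0 < sqrt (z + p)) by (apply sqrt_lt_R0; lra).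
  apply Rdiv_lt_0_compat; [lra|]; repeat apply Rmult_lt_0_compat; auto.
Qed.

Lemma tail_kernel_continuous z : q < z -> continuous (tail_kernel q p) z.
Proof.
  intros hz; apply continuous_of_ex_derive; unfold tail_kernel; auto_derive.
  repeat split; try lra; [nra|].
  assert (0 < sqrt (z * (z * 1) + 4)) by (apply sqrt_lt_R0; nra).
  assert (0 < sqrt (z - q)) by (apply sqrt_lt_R0; lra).
  assert (0 < sqrt (z + p)) by (apply sqrt_lt_R0; lra).
  apply Rgt_not_eq; repeat apply Rmult_lt_0_compat; auto.
Qed.

Lemma ex_RInt_tail_kernel c d : q < c -> c <= d -> ex_RInt (tail_kernel q p) c d.
Proof.
  intros hc hcd; apply ex_RInt_continuous_on; auto.
  intros; apply tail_kernel_continuous; lra.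
Qed.

(* [1 + (z - q) <= sqrt (2 + (1 - q)^2) * sqrt (z^2 + 4)] by Cauchy-Schwarz. *)
Lemma tail_kernel_le_atan_kernel z : q < z ->
  tail_kernel q p z <=
  sqrt (q + p) * sqrt (2 + (1 - q) ^ 2) * / (sqrt (z - q) * (1 + (z - q))).
Proof.
  intros hz; unfold tail_kernel.
  set (A := sqrt (z ^ 2 + 4)); set (U := sqrt (z - q)); set (W := sqrt (z + p)).
  set (k := sqrt (2 + (1 - q) ^ 2)); set (r := sqrt (q + p)).
  pose proof (pow2_ge_0 z); pose proof (pow2_ge_0 (1 - q)).
  assert (pA : 0 < A) by (apply sqrt_lt_R0; lra).
  assert (pU : 0 < U) by (apply sqrt_lt_R0; lra).
  assert (pk : 0 < k) by (apply sqrt_lt_R0; lra).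
  assert (pW : 0 < W) by (apply sqrt_lt_R0; lra).
  assert (pr : 0 < r) by (apply sqrt_lt_R0; lra).
  assert (eA : A * A = z ^ 2 + 4) by (apply sqrt_sqrt; lra).
  assert (ek : k * k = 2 + (1 - q) ^ 2) by (apply sqrt_sqrt; lra).
  assert (er : r * r = q + p) by (apply sqrt_sqrt; lra).
  assert (rW : r <= W) by (apply sqrt_le_1; lra).
  assert (hkA : 1 + (z - q) <= k * A).
  { assert ((1 + (z - q)) ^ 2 <= (k * A) ^ 2).
    { replace ((k * A) ^ 2) with ((k * k) * (A * A)) by ring; rewrite ek, eA.
      assert (0 <= (1 - q) ^ 2 * z ^ 2) by (apply Rmult_le_pos; auto).
      assert (0 <= (z - (1 - q)) ^ 2) by apply pow2_ge_0; nra. }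
    assert (0 <= k * A) by nra; nra. }
  rewrite <- er; apply Rmult_le_reg_r with (A * U * W * (U * (1 + (z - q))));
    [repeat apply Rmult_lt_0_compat; lra|].
  replace (r * r / (A * U * W) * (A * U * W * (U * (1 + (z - q)))))
    with (r * r * (U * (1 + (z - q)))) by (field; repeat split; lra).
  replace (r * k * / (U * (1 + (z - q))) * (A * U * W * (U * (1 + (z - q)))))
    with (r * U * W * (k * A)) by (field; lra).
  assert (r * r * U <= r * U * W).
  { replace (r * r * U) with ((r * U) * r) by ring; apply Rmult_le_compat_l; nra. }
  replace (r * r * (U * (1 + (z - q)))) with ((r * r * U) * (1 + (z - q))) by ring.
  apply Rmult_le_compat; try lra; nra.
Qed.

Lemma tail_kernel_mul_sq_le z : q < z ->
  tail_kernel q p z * z ^ 2 <= (q + p) + sqrt (q + p) * Rabs q / sqrt (z - q).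
Proof.
  intros hz; unfold tail_kernel.
  set (A := sqrt (z ^ 2 + 4)); set (U := sqrt (z - q)); set (W := sqrt (z + p)).
  set (r := sqrt (q + p)).
  pose proof (pow2_ge_0 z); pose proof (Rabs_pos q); pose proof (Rabs_pos z).
  assert (pA : 0 < A) by (apply sqrt_lt_R0; lra).
  assert (pU : 0 < U) by (apply sqrt_lt_R0; lra).
  assert (pW : 0 < W) by (apply sqrt_lt_R0; lra).
  assert (pr : 0 < r) by (apply sqrt_lt_R0; lra).
  assert (eA : A * A = z ^ 2 + 4) by (apply sqrt_sqrt; lra).
  assert (eU : U * U = z - q) by (apply sqrt_sqrt; lra).
  assert (er : r * r = q + p) by (apply sqrt_sqrt; lra).
  assert (UW : U <= W) by (apply sqrt_le_1; lra).
  assert (rW : r <= W) by (apply sqrt_le_1; lra).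
  assert (eZ : Rabs z * Rabs z = z ^ 2) by (rewrite <- Rabs_mult, Rabs_pos_eq; nra).
  assert (zA : Rabs z <= A) by nra.
  assert (zU : Rabs z <= U * U + Rabs q).
  { rewrite eU; pose proof (Rle_abs q); pose proof (Rle_abs (- q)); rewrite Rabs_Ropp in *.
    apply Rabs_le; lra. }
  rewrite <- er; apply Rmult_le_reg_r with (A * U * W); [repeat apply Rmult_lt_0_compat; lra|].
  replace (r * r / (A * U * W) * z ^ 2 * (A * U * W)) with (r * r * z ^ 2) by (field; lra).
  replace ((r * r + r * Rabs q / U) * (A * U * W)) with (r * A * (r * U * W + Rabs q * W))
    by (field; lra).
  assert (z ^ 2 <= A * (U * U + Rabs q)) by nra.
  assert (r * U * U <= r * U * W) by (apply Rmult_le_compat_l; nra).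
  assert (r * Rabs q <= Rabs q * W) by nra.
  assert (r * r * z ^ 2 <= r * r * (A * (U * U + Rabs q))) by (apply Rmult_le_compat_l; nra).
  assert (0 <= r * A) by nra.
  assert (r * A * (r * (U * U + Rabs q)) <= r * A * (r * U * W + Rabs q * W))
    by (apply Rmult_le_compat_l; lra).
  nra.
Qed.

End TailKernel.

Lemma RInt_atan_kernel q c d : q < c -> c <= d ->
  ex_RInt (fun z => / (sqrt (z - q) * (1 + (z - q)))) c d /\
  RInt (fun z => / (sqrt (z - q) * (1 + (z - q)))) c d =
  2 * atan (sqrt (d - q)) - 2 * atan (sqrt (c - q)).
Proof.
  intros hc hcd; apply (RInt_derive_on (fun z => 2 * atan (sqrt (z - q)))); auto.
  intros x Hx; assert (0 < sqrt (x - q)) by (apply sqrt_lt_R0; lra); split.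
  - auto_derive; [lra|].
    replace (x + - q) with (x - q) by ring.
    rewrite Rmult_1_r, sqrt_sqrt by lra; field; lra.
  - apply continuous_of_ex_derive; auto_derive; repeat split; try lra.
    replace (x + - q) with (x - q) by ring; nra.
Qed.

Lemma RInt_inv_sqrt_ends q t c d : q < c -> c <= d -> d < t ->
  ex_RInt (fun z => / sqrt (z - q) + / sqrt (t - z)) c d /\
  RInt (fun z => / sqrt (z - q) + / sqrt (t - z)) c d =
  (2 * sqrt (d - q) - 2 * sqrt (t - d)) - (2 * sqrt (c - q) - 2 * sqrt (t - c)).
Proof.
  intros hc hcd hd; apply (RInt_derive_on (fun z => 2 * sqrt (z - q) - 2 * sqrt (t - z))); auto.
  intros x Hx; replace (x - q) with (x + - q) by ring; replace (t - x) with (t + - x) by ring.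
  assert (0 < sqrt (x + - q)) by (apply sqrt_lt_R0; lra).
  assert (0 < sqrt (t + - x)) by (apply sqrt_lt_R0; lra).
  split.
  - auto_derive; [lra|]; field; lra.
  - apply continuous_of_ex_derive; auto_derive; repeat split; lra.
Qed.

Lemma tail_kernel_improper q p : q + p > 0 ->
  exists L, is_improper_RInt_pinf (tail_kernel q p) q L /\ 0 < L.
Proof.
  intros hqp.
  set (M := sqrt (q + p) * sqrt (2 + (1 - q) ^ 2)).
  assert (pM : 0 <= M) by (apply Rmult_le_pos; apply sqrt_pos).
  assert (Hpos : forall z, q < z -> 0 <= tail_kernel q p z)
    by (intros; left; now apply tail_kernel_pos).
  destruct (is_improper_RInt_pinf_of_bounded (tail_kernel q p) q (M * (2 * PI)))
    as [L HL]; auto.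
  { intros; now apply ex_RInt_tail_kernel. }
  { intros c d hc hcd; destruct (RInt_atan_kernel q c d hc hcd) as [Hex Heq].
    apply Rle_trans with (RInt (fun z => M * / (sqrt (z - q) * (1 + (z - q)))) c d).
    - apply RInt_le; auto; [now apply ex_RInt_tail_kernel | now apply ex_RInt_scalR|].
      intros x Hx; apply tail_kernel_le_atan_kernel; lra.
    - rewrite RInt_scalR, Heq by auto; apply Rmult_le_compat_l; auto.
      pose proof (atan_bound (sqrt (d - q))); pose proof (atan_bound (sqrt (c - q))); lra. }
  exists L; split; auto.
  apply Rlt_le_trans with (RInt (tail_kernel q p) (q + 1) (q + 2)).
  - rewrite <- (RInt_zeroR (q + 1) (q + 2)); apply RInt_lt; [lra| | |].
    + intros; apply tail_kernel_continuous; auto; lra.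
    + intros; apply continuous_const.
    + intros; apply tail_kernel_pos; auto; lra.
  - apply (RInt_le_improper_pinf _ q); auto; lra.
Qed.

Lemma chord_weight_sub1_le t z : 0 < t -> z ^ 2 < t ^ 2 ->
  t / sqrt (t ^ 2 - z ^ 2) - 1 <= z ^ 2 / (t * sqrt (t ^ 2 - z ^ 2)).
Proof.
  intros ht hz; set (S := sqrt (t ^ 2 - z ^ 2)).
  assert (pS : 0 < S) by (apply sqrt_lt_R0; lra).
  assert (eS : S * S = t ^ 2 - z ^ 2) by (apply sqrt_sqrt; lra).
  assert (S <= t) by nra.
  apply Rmult_le_reg_r with (t * S); [nra|].
  replace ((t / S - 1) * (t * S)) with (t * t - t * S) by (field; lra).
  replace (z ^ 2 / (t * S) * (t * S)) with (z ^ 2) by (field; lra).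
  nra.
Qed.

Lemma inv_sqrt_chord_le t z : - t / 2 <= z < t ->
  / sqrt (t ^ 2 - z ^ 2) <= sqrt 2 / (sqrt t * sqrt (t - z)).
Proof.
  intros hz.
  assert (pS : 0 < sqrt (t ^ 2 - z ^ 2)) by (apply sqrt_lt_R0; nra).
  assert (pT : 0 < sqrt t) by (apply sqrt_lt_R0; lra).
  assert (pV : 0 < sqrt (t - z)) by (apply sqrt_lt_R0; lra).
  assert (sqrt t * sqrt (t - z) <= sqrt 2 * sqrt (t ^ 2 - z ^ 2))
    by (rewrite <- !sqrt_mult by nra; apply sqrt_le_1; nra).
  apply Rmult_le_reg_r with (sqrt (t ^ 2 - z ^ 2) * (sqrt t * sqrt (t - z)));
    [repeat apply Rmult_lt_0_compat; lra|].
  replace (/ sqrt (t ^ 2 - z ^ 2) * (sqrt (t ^ 2 - z ^ 2) * (sqrt t * sqrt (t - z))))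
    with (sqrt t * sqrt (t - z)) by (field; lra).
  replace (sqrt 2 / (sqrt t * sqrt (t - z)) * (sqrt (t ^ 2 - z ^ 2) * (sqrt t * sqrt (t - z))))
    with (sqrt 2 * sqrt (t ^ 2 - z ^ 2)) by (field; lra).
  lra.
Qed.

Lemma inv_sqrt_sum_le U V s C : 0 < U -> 0 < V -> 1 <= U * U + V * V ->
  0 <= s -> 0 <= C -> (s + C / U) / V <= (s + C) * (/ U + / V).
Proof.
  intros pU pV hUV hs hC.
  assert (1 <= U + V) by nra.
  assert (0 < / U) by now apply Rinv_0_lt_compat.
  assert (0 < / V) by now apply Rinv_0_lt_compat.
  assert (/ U * / V <= / U + / V).
  { apply Rmult_le_reg_r with (U * V); [nra|].
    replace (/ U * / V * (U * V)) with 1 by (field; lra).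
    replace ((/ U + / V) * (U * V)) with (V + U) by (field; lra); lra. }
  replace ((s + C / U) / V) with (s * / V + C * (/ U * / V)) by (field; lra).
  nra.
Qed.

Lemma tail_weight_error q p t z : q + p > 0 -> q < z < t -> 2 * Rabs q + 2 <= t ->
  t * (tail_kernel q p z / sqrt (t ^ 2 - z ^ 2)) <=
  tail_kernel q p z + sqrt 2 * ((q + p) + sqrt (q + p) * Rabs q) / (t * sqrt t) *
    (/ sqrt (z - q) + / sqrt (t - z)).
Proof.
  intros hqp hz ht.
  pose proof (Rle_abs q) as hq; pose proof (Rle_abs (- q)) as hq'; rewrite Rabs_Ropp in hq'.
  set (H := tail_kernel q p z); set (S := sqrt (t ^ 2 - z ^ 2)); set (T := sqrt t).
  set (U := sqrt (z - q)); set (V := sqrt (t - z)).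
  set (C := sqrt (q + p) * Rabs q).
  assert (pH : 0 < H) by (apply tail_kernel_pos; lra).
  assert (pS : 0 < S) by (apply sqrt_lt_R0; nra).
  assert (pT : 0 < T) by (apply sqrt_lt_R0; lra).
  assert (pU : 0 < U) by (apply sqrt_lt_R0; lra).
  assert (pV : 0 < V) by (apply sqrt_lt_R0; lra).
  assert (p2 : 0 < sqrt 2) by (apply sqrt_lt_R0; lra).
  assert (pC : 0 <= C) by (apply Rmult_le_pos; [apply sqrt_pos | apply Rabs_pos]).
  assert (eUV : U * U + V * V = t - q) by (unfold U, V; rewrite !sqrt_sqrt; lra).
  assert (Hexcess : t * (H / S) - H <= H * z ^ 2 / S / t).
  { replace (t * (H / S) - H) with (H * (t / S - 1)) by (field; lra).
    replace (H * z ^ 2 / S / t) with (H * (z ^ 2 / (t * S))) by (field; lra).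
    apply Rmult_le_compat_l; [lra|]; apply chord_weight_sub1_le; nra. }
  assert (Hsq : H * z ^ 2 / S / t <= (q + p + C / U) / S / t).
  { assert (H * z ^ 2 <= q + p + C / U) by (apply tail_kernel_mul_sq_le; lra).
    unfold Rdiv; apply Rmult_le_compat_r; [left; apply Rinv_0_lt_compat; lra|].
    apply Rmult_le_compat_r; [left; apply Rinv_0_lt_compat; lra|]; auto. }
  assert (HS : / S <= sqrt 2 / (T * V)) by (apply inv_sqrt_chord_le; split; lra).
  assert (HUV : (q + p + C / U) / V <= (q + p + C) * (/ U + / V))
    by (apply inv_sqrt_sum_le; lra).
  assert (0 <= q + p + C / U) by (apply Rplus_le_le_0_compat; [lra|];
    apply Rdiv_le_0_compat; lra).
  assert ((q + p + C / U) / S / t <= sqrt 2 / (t * T) * ((q + p + C / U) / V)).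
  { replace (sqrt 2 / (t * T) * ((q + p + C / U) / V))
      with ((q + p + C / U) * (sqrt 2 / (T * V)) / t) by (field; lra).
    unfold Rdiv at 1 2 4; apply Rmult_le_compat_r; [left; apply Rinv_0_lt_compat; lra|].
    apply Rmult_le_compat_l; auto. }
  assert (sqrt 2 / (t * T) * ((q + p + C / U) / V) <=
          sqrt 2 / (t * T) * ((q + p + C) * (/ U + / V))).
  { apply Rmult_le_compat_l; auto; apply Rdiv_le_0_compat; nra. }
  replace (sqrt 2 * (q + p + C) / (t * T) * (/ U + / V))
    with (sqrt 2 / (t * T) * ((q + p + C) * (/ U + / V))) by (field; lra).
  lra.
Qed.

Section ScaledTailIntegral.

Variables (q p : R).
Hypothesis hqp : q + p > 0.

Lemma RInt_tail_kernel_le_scaled t D c d : Rabs q < t ->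
  is_improper_RInt (fun z => tail_kernel q p z / sqrt (t ^ 2 - z ^ 2)) q t D ->
  q < c -> c <= d -> d < t -> RInt (tail_kernel q p) c d <= t * D.
Proof.
  intros ht HD hc hcd hd.
  pose proof (Rle_abs q); pose proof (Rle_abs (- q)) as hq'; rewrite Rabs_Ropp in hq'.
  assert (Hw : forall z, q < z < t ->
    0 <= tail_kernel q p z <= t * (tail_kernel q p z / sqrt (t ^ 2 - z ^ 2))).
  { intros z hz; pose proof (tail_kernel_pos q p hqp z ltac:(lra)).
    destruct (chord_weight_bounds (z ^ 2) t z) as [Hge _]; try lra; [nra|].
    replace (t * (tail_kernel q p z / sqrt (t ^ 2 - z ^ 2)))
      with (t / sqrt (t ^ 2 - z ^ 2) * tail_kernel q p z) by (unfold Rdiv; ring).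
    split; nra. }
  pose proof (is_improper_RInt_scal _ _ _ _ t HD) as HtD.
  apply Rle_trans with (RInt (fun z => t * (tail_kernel q p z / sqrt (t ^ 2 - z ^ 2))) c d).
  - apply RInt_le; auto; [apply ex_RInt_tail_kernel; auto | apply HtD; auto |].
    intros z hz; apply Hw; lra.
  - apply (RInt_le_improper _ q t); auto; intros z hz; specialize (Hw z hz); lra.
Qed.

Lemma scaled_tail_integral_le t D L : 2 * Rabs q + 2 <= t ->
  is_improper_RInt_pinf (tail_kernel q p) q L ->
  is_improper_RInt (fun z => tail_kernel q p z / sqrt (t ^ 2 - z ^ 2)) q t D ->
  t * D <= L + 8 * ((q + p) + sqrt (q + p) * Rabs q) / t.
Proof.
  intros ht HL HD.
  pose proof (Rle_abs q); pose proof (Rle_abs (- q)) as hq'; rewrite Rabs_Ropp in hq'.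
  set (E := sqrt 2 * ((q + p) + sqrt (q + p) * Rabs q)); set (T := sqrt t).
  assert (pT : 0 < T) by (apply sqrt_lt_R0; lra).
  assert (pE : 0 <= E / (t * T)).
  { apply Rdiv_le_0_compat; [|apply Rmult_lt_0_compat; lra].
    apply Rmult_le_pos; [apply sqrt_pos|].
    pose proof (sqrt_pos (q + p)); pose proof (Rabs_pos q); nra. }
  assert (Hqt : sqrt (t - q) <= sqrt 2 * T)
    by (unfold T; rewrite <- sqrt_mult by lra; apply sqrt_le_1; lra).
  replace (8 * ((q + p) + sqrt (q + p) * Rabs q) / t) with (E / (t * T) * (4 * (sqrt 2 * T))).
  2: { unfold E; field_simplify_eq; [|split; lra].
       replace (sqrt 2 ^ 2) with 2 by (rewrite <- Rsqr_pow2, Rsqr_sqrt; lra); ring. }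
  pose proof (is_improper_RInt_scal _ _ _ _ t HD) as HtD.
  apply (improper_le_of_RInt_le _ q t _ _ ltac:(lra) HtD); intros c d hc hcd hd.
  destruct (RInt_inv_sqrt_ends q t c d hc hcd hd) as [Hex Heq].
  apply Rle_trans with
    (RInt (fun z => tail_kernel q p z + E / (t * T) * (/ sqrt (z - q) + / sqrt (t - z))) c d).
  - apply RInt_le; auto; [apply HtD; auto | |].
    + apply ex_RInt_plusR; [apply ex_RInt_tail_kernel; auto | now apply ex_RInt_scalR].
    + intros z hz; apply tail_weight_error; auto; lra.
  - rewrite RInt_plusR, RInt_scalR, Heq; auto;
      [| apply ex_RInt_tail_kernel; auto | now apply ex_RInt_scalR].
    apply Rplus_le_compat; [apply (RInt_le_improper_pinf _ q); auto|].
    + intros z hz; left; now apply tail_kernel_pos.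
    + apply Rmult_le_compat_l; auto.
      assert (sqrt (d - q) <= sqrt (t - q)) by (apply sqrt_le_1; lra).
      assert (sqrt (t - c) <= sqrt (t - q)) by (apply sqrt_le_1; lra).
      pose proof (sqrt_pos (t - d)); pose proof (sqrt_pos (c - q)); lra.
Qed.

Lemma tends_scaled_tail_integral D :
  (forall t, p < t -> q < t ->
     is_improper_RInt (fun z => tail_kernel q p z / sqrt (t ^ 2 - z ^ 2)) q t (D t)) ->
  exists L, is_improper_RInt_pinf (tail_kernel q p) q L /\ 0 < L /\
    tends_at_pinf (fun t => t * D t) L.
Proof.
  intros HD; destruct (tail_kernel_improper q p hqp) as [L [HL pL]].
  exists L; split; [|split]; auto.
  set (E := (q + p) + sqrt (q + p) * Rabs q).
  assert (pE : 0 <= E) by (pose proof (sqrt_pos (q + p)); pose proof (Rabs_pos q); unfold E; nra).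
  intros eps Heps.
  destruct (proj2 HL (eps / 2)) as [M [delta [Hdelta HM]]]; [lra|].
  set (c := q + delta / 2); set (d := Rmax M c + 1).
  pose proof (Rmax_l M c); pose proof (Rmax_r M c).
  assert (Hcd : Rabs (RInt (tail_kernel q p) c d - L) < eps / 2)
    by (apply HM; unfold d, c in *; lra).
  rewrite Rabs_lt_between in Hcd.
  exists (2 * Rabs q + 2 + Rabs p + Rabs d + 16 * E / eps); intros t ht.
  assert (0 <= 16 * E / eps) by (apply Rdiv_le_0_compat; lra).
  pose proof (Rabs_pos q); pose proof (Rle_abs q); pose proof (Rle_abs (- q)) as hq'.
  rewrite Rabs_Ropp in hq'; pose proof (Rle_abs p); pose proof (Rle_abs d).
  pose proof (Rabs_pos p); pose proof (Rabs_pos d).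
  assert (HDt := HD t ltac:(lra) ltac:(lra)).
  assert (RInt (tail_kernel q p) c d <= t * D t)
    by (apply (RInt_tail_kernel_le_scaled t); auto; unfold d, c in *; lra).
  assert (t * D t <= L + 8 * E / t) by (apply scaled_tail_integral_le; auto; lra).
  assert (8 * E / t < eps / 2).
  { apply Rmult_lt_reg_r with t; [lra|].
    replace (8 * E / t * t) with (8 * E) by (field; lra).
    apply Rmult_lt_reg_r with (2 / eps); [apply Rdiv_lt_0_compat; lra|].
    replace (eps / 2 * t * (2 / eps)) with t by (field; lra).
    replace (8 * E * (2 / eps)) with (16 * E / eps) by (field; lra); lra. }
  apply Rabs_lt_between; lra.
Qed.

End ScaledTailIntegral.

Lemma RInt_fold_midpoint g c m : c <= m -> ex_RInt g c (2 * m - c) ->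
  RInt g c (2 * m - c) = RInt (fun y => g y + g (2 * m - y)) c m.
Proof.
  intros hcm Hex.
  assert (H1 : ex_RInt g c m) by (apply (ex_RInt_Chasles_1 g c m (2 * m - c)); auto; lra).
  assert (H2 : ex_RInt g m (2 * m - c)) by (apply (ex_RInt_Chasles_2 g c m (2 * m - c)); auto; lra).
  destruct (RInt_reflect g (2 * m) c m) as [Hex' Heq];
    [now replace (2 * m - m) with m by ring|].
  replace (2 * m - m) with m in Heq by ring.
  rewrite RInt_plusR, Heq by auto.
  symmetry; exact (RInt_Chasles g c m (2 * m - c) H1 H2).
Qed.

Definition g1_reduced (a b z : R) : R := 1 / sqrt (z ^ 2 + 4) * sqrt ((a + z) / (b - z)).
Definition g2_reduced (a b z : R) : R := 1 / sqrt (z ^ 2 + 4) * sqrt ((b - z) / (a + z)).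

Section ReducedIntegrands.

Variables (a b : R).

Lemma g1_reduced_continuous z : - a < z < b -> continuous (g1_reduced a b) z.
Proof.
  intros hz; apply continuous_of_ex_derive; unfold g1_reduced; auto_derive.
  repeat split; try lra; [nra | |apply Rdiv_lt_0_compat; lra].
  assert (0 < sqrt (z * (z * 1) + 4)) by (apply sqrt_lt_R0; nra); lra.
Qed.

Lemma g2_reduced_continuous z : - a < z < b -> continuous (g2_reduced a b) z.
Proof.
  intros hz; apply continuous_of_ex_derive; unfold g2_reduced; auto_derive.
  repeat split; try lra; [nra | |apply Rdiv_lt_0_compat; lra].
  assert (0 < sqrt (z * (z * 1) + 4)) by (apply sqrt_lt_R0; nra); lra.
Qed.

Lemma g1_reduced_nonneg z : 0 <= g1_reduced a b z.
Proof.
  unfold g1_reduced; apply Rmult_le_pos; [apply Rdiv_le_0_compat|]; try lra;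
    [apply sqrt_lt_R0; pose proof (pow2_ge_0 z); lra | apply sqrt_pos].
Qed.

Lemma g2_reduced_nonneg z : 0 <= g2_reduced a b z.
Proof.
  unfold g2_reduced; apply Rmult_le_pos; [apply Rdiv_le_0_compat|]; try lra;
    [apply sqrt_lt_R0; pose proof (pow2_ge_0 z); lra | apply sqrt_pos].
Qed.

Lemma g1_eq_reduced t z : - a < z < b ->
  g1 a b t z = g1_reduced a b z / sqrt (t ^ 2 - z ^ 2).
Proof.
  intros hz; unfold g1, g1_reduced.
  rewrite (Rabs_pos_eq (z + a)), (Rabs_left1 (z - b)) by lra.
  replace (- (z - b)) with (b - z) by ring; replace (z + a) with (a + z) by ring.
  rewrite sqrt_div_alt by lra; unfold Rdiv; ring.
Qed.

Lemma g2_eq_reduced t z : - a < z < b ->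
  g2 a b t z = g2_reduced a b z / sqrt (t ^ 2 - z ^ 2).
Proof.
  intros hz; unfold g2, g2_reduced.
  rewrite (Rabs_pos_eq (z + a)), (Rabs_left1 (z - b)) by lra.
  replace (- (z - b)) with (b - z) by ring; replace (z + a) with (a + z) by ring.
  rewrite sqrt_div_alt by lra; unfold Rdiv; ring.
Qed.

Hypothesis hab : a < b.

(* The reflection about the midpoint m of (-a, b) swaps a + z and b - z; on the left half
   g2_reduced > g1_reduced and the factor 1 / sqrt (z^2 + 4) is larger than at the mirror point. *)
Lemma reduced_difference_mirror_pos y : a + b > 0 -> - a < y < (b - a) / 2 ->
  let g := fun z => g2_reduced a b z - g1_reduced a b z in
  0 < g y + g (2 * ((b - a) / 2) - y).
Proof.
  intros hs hy g; unfold g, g1_reduced, g2_reduced.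
  replace (b - (2 * ((b - a) / 2) - y)) with (a + y) by field.
  replace (a + (2 * ((b - a) / 2) - y)) with (b - y) by field.
  set (m := (b - a) / 2) in *; assert (hm : m = (b - a) / 2) by reflexivity.
  set (P := 1 / sqrt (y ^ 2 + 4)); set (Q := 1 / sqrt ((2 * m - y) ^ 2 + 4)).
  set (A := sqrt ((b - y) / (a + y))); set (B := sqrt ((a + y) / (b - y))).
  pose proof (pow2_ge_0 y); pose proof (pow2_ge_0 (2 * m - y)).
  assert (PQ : Q < P).
  { unfold P, Q, Rdiv; rewrite !Rmult_1_l; apply Rinv_lt_contravar.
    - apply Rmult_lt_0_compat; apply sqrt_lt_R0; lra.
    - apply sqrt_lt_1; try lra; assert (0 < m - y) by lra; simpl; nra. }
  assert (AB : B < A).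
  { unfold A, B; apply sqrt_lt_1; [apply Rdiv_le_0_compat; lra | apply Rdiv_le_0_compat; lra |].
    apply Rmult_lt_reg_r with ((a + y) * (b - y)); [apply Rmult_lt_0_compat; lra|].
    replace ((a + y) / (b - y) * ((a + y) * (b - y))) with ((a + y) * (a + y)) by (field; lra).
    replace ((b - y) / (a + y) * ((a + y) * (b - y))) with ((b - y) * (b - y)) by (field; lra).
    nra. }
  replace (P * A - P * B + (Q * B - Q * A)) with ((P - Q) * (A - B)) by ring.
  apply Rmult_lt_0_compat; lra.
Qed.

Lemma reduced_integrals_lt LI LJ : a + b > 0 ->
  is_improper_RInt (g1_reduced a b) (- a) b LI ->
  is_improper_RInt (g2_reduced a b) (- a) b LJ -> LI < LJ.
Proof.
  intros hs HI HJ.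
  set (g := fun z => g2_reduced a b z - g1_reduced a b z).
  set (m := (b - a) / 2); set (phi := fun y => g y + g (2 * m - y)).
  assert (G : is_improper_RInt g (- a) b (LJ - LI)) by now apply is_improper_RInt_minus.
  assert (gcont : forall z, - a < z < b -> continuous g z).
  { intros z hz; apply (continuous_minus (V := R_NormedModule));
      [apply g2_reduced_continuous | apply g1_reduced_continuous]; auto. }
  assert (phicont : forall y, - a < y <= m -> continuous phi y).
  { intros y hy; apply (continuous_plus (V := R_NormedModule)); [apply gcont; unfold m in *; lra|].
    apply (continuous_comp (fun y => 2 * m - y) g); [|apply gcont; unfold m in *; lra].
    apply (continuous_minus (V := R_NormedModule)); [apply continuous_const | apply continuous_id]. }
  assert (phipos : forall y, - a < y < m -> 0 < phi y)
    by (intros y hy; apply reduced_difference_mirror_pos; auto).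
  set (c1 := (- a + m) / 2).
  assert (hc1 : - a < c1 < m) by (unfold c1, m; lra).
  set (kappa := RInt phi c1 m).
  assert (hk : 0 < kappa).
  { unfold kappa; rewrite <- (RInt_zeroR c1 m); apply RInt_lt; [lra | | |].
    - intros; apply phicont; lra.
    - intros; apply continuous_const.
    - intros; apply phipos; lra. }
  assert (Key : forall c, - a < c <= c1 -> kappa <= RInt g c (2 * m - c)).
  { intros c hc; rewrite RInt_fold_midpoint; [|lra|].
    - apply RInt_Chasles_le; try lra; [|intros; left; apply phipos; lra].
      apply ex_RInt_continuous_on; [lra|]; intros; apply phicont; lra.
    - apply ex_RInt_continuous_on; [unfold m in *; lra|].
      intros; apply gcont; unfold m in *; lra. }
  destruct (proj2 G (kappa / 2)) as [delta [Hdelta Hd]]; [lra|].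
  pose proof (Rmin_l delta (c1 + a)); pose proof (Rmin_r delta (c1 + a)).
  assert (0 < Rmin delta (c1 + a)) by (apply Rmin_glb_lt; lra).
  set (c := - a + Rmin delta (c1 + a) / 2).
  assert (K1 : kappa <= RInt g c (2 * m - c)) by (apply Key; unfold c; lra).
  assert (K2 : Rabs (RInt g c (2 * m - c) - (LJ - LI)) < kappa / 2)
    by (apply Hd; unfold c, m in *; lra).
  rewrite Rabs_lt_between in K2; lra.
Qed.

End ReducedIntegrands.

Lemma sqrt_ratio_sub u v : 0 < u -> 0 < v ->
  sqrt u / sqrt v - sqrt v / sqrt u = (u - v) / (sqrt v * sqrt u).
Proof.
  intros hu hv.
  assert (0 < sqrt u) by (apply sqrt_lt_R0; lra); assert (0 < sqrt v) by (apply sqrt_lt_R0; lra).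
  rewrite <- (sqrt_sqrt u) at 3 by lra; rewrite <- (sqrt_sqrt v) at 3 by lra.
  field; lra.
Qed.

Section OuterIntegrands.

Variables (a b t : R).
Hypothesis hab : a + b > 0.

Lemma g1_sub_g2_right z : b < z ->
  g1 a b t z - g2 a b t z = tail_kernel b a z / sqrt (t ^ 2 - z ^ 2).
Proof.
  intros hz; unfold g1, g2, tail_kernel.
  rewrite (Rabs_pos_eq (z + a)), (Rabs_pos_eq (z - b)) by lra.
  assert (0 < sqrt (z ^ 2 + 4)) by (apply sqrt_lt_R0; pose proof (pow2_ge_0 z); lra).
  assert (0 < sqrt (z - b)) by (apply sqrt_lt_R0; lra).
  assert (0 < sqrt (z + a)) by (apply sqrt_lt_R0; lra).
  transitivity ((sqrt (z + a) / sqrt (z - b) - sqrt (z - b) / sqrt (z + a)) *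
                / sqrt (t ^ 2 - z ^ 2) * / sqrt (z ^ 2 + 4)); [unfold Rdiv; ring|].
  rewrite sqrt_ratio_sub by lra; replace (z + a - (z - b)) with (b + a) by ring.
  unfold Rdiv; rewrite !Rinv_mult; ring.
Qed.

Lemma g2_sub_g1_left x : a < x ->
  g2 a b t (- x) - g1 a b t (- x) = tail_kernel a b x / sqrt (t ^ 2 - x ^ 2).
Proof.
  intros hx; unfold g1, g2, tail_kernel.
  rewrite (Rabs_left1 (- x + a)), (Rabs_left1 (- x - b)) by lra.
  replace (- (- x + a)) with (x - a) by ring; replace (- (- x - b)) with (x + b) by ring.
  replace ((- x) ^ 2) with (x ^ 2) by ring.
  assert (0 < sqrt (x ^ 2 + 4)) by (apply sqrt_lt_R0; pose proof (pow2_ge_0 x); lra).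
  assert (0 < sqrt (x - a)) by (apply sqrt_lt_R0; lra).
  assert (0 < sqrt (x + b)) by (apply sqrt_lt_R0; lra).
  transitivity ((sqrt (x + b) / sqrt (x - a) - sqrt (x - a) / sqrt (x + b)) *
                / sqrt (t ^ 2 - x ^ 2) * / sqrt (x ^ 2 + 4)); [unfold Rdiv; ring|].
  rewrite sqrt_ratio_sub by lra; replace (x + b - (x - a)) with (a + b) by ring.
  unfold Rdiv; rewrite !Rinv_mult; ring.
Qed.

Lemma inv_two_sub_le_scaled_g2 z : - t < z -> z < - Rabs a - 1 ->
  / (2 - z) <= t * g2 a b t z.
Proof.
  intros h1 h2; pose proof (Rle_abs a); pose proof (Rle_abs (- a)) as ha'.
  rewrite Rabs_Ropp in ha'; pose proof (Rabs_pos a); pose proof (pow2_ge_0 z).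
  unfold g2; rewrite (Rabs_left1 (z - b)), (Rabs_left1 (z + a)) by lra.
  replace (- (z - b)) with (b - z) by ring; replace (- (z + a)) with (- a - z) by ring.
  set (S := sqrt (t ^ 2 - z ^ 2)); set (A := sqrt (z ^ 2 + 4)).
  set (X := sqrt (b - z)); set (Y := sqrt (- a - z)).
  assert (pS : 0 < S) by (apply sqrt_lt_R0; nra).
  assert (St : S <= t).
  { apply Rle_trans with (sqrt (t ^ 2)); [apply sqrt_le_1; nra | rewrite sqrt_pow2; lra]. }
  assert (pA : 0 < A) by (apply sqrt_lt_R0; lra).
  assert (A2 : A <= 2 - z).
  { apply Rle_trans with (sqrt ((2 - z) ^ 2)); [apply sqrt_le_1; nra | rewrite sqrt_pow2; lra]. }
  assert (pY : 0 < Y) by (apply sqrt_lt_R0; lra).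
  assert (YX : Y <= X) by (apply sqrt_le_1; lra).
  replace (t * (X / Y / S / A)) with ((X / Y) * (t / S) * / A) by (field; lra).
  assert (1 <= X / Y).
  { apply Rmult_le_reg_r with Y; auto; unfold Rdiv; rewrite Rmult_assoc, Rinv_l; lra. }
  assert (1 <= t / S).
  { apply Rmult_le_reg_r with S; auto; unfold Rdiv; rewrite Rmult_assoc, Rinv_l; lra. }
  assert (/ (2 - z) <= / A) by (apply Rinv_le_contravar; lra).
  assert (0 < / (2 - z)) by (apply Rinv_0_lt_compat; lra).
  assert (1 <= X / Y * (t / S)) by nra; nra.
Qed.

End OuterIntegrands.

Lemma inv_sqrt_nonneg x : 0 <= / sqrt x.
Proof.
  destruct (Req_dec (sqrt x) 0) as [E|E]; [rewrite E, Rinv_0; lra|].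
  pose proof (sqrt_pos x); left; apply Rinv_0_lt_compat; lra.
Qed.

Lemma g2_nonneg a b t z : 0 <= g2 a b t z.
Proof.
  unfold g2, Rdiv; repeat apply Rmult_le_pos; apply sqrt_pos || apply inv_sqrt_nonneg.
Qed.

Lemma RInt_inv_two_sub c d : c <= d -> d < 2 ->
  ex_RInt (fun z => / (2 - z)) c d /\ RInt (fun z => / (2 - z)) c d = ln (2 - c) - ln (2 - d).
Proof.
  intros hcd hd.
  replace (ln (2 - c) - ln (2 - d)) with ((- ln (2 - d)) - (- ln (2 - c))) by ring.
  apply (RInt_derive_on (fun z => - ln (2 - z))); auto; intros x Hx; split.
  - auto_derive; [lra|]; field; lra.
  - apply continuous_of_ex_derive; auto_derive; lra.
Qed.

Lemma tends_scaled_middle_period alpha beta (g : R -> R -> R) h F : - alpha < beta ->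
  (forall z, - alpha < z < beta -> continuous h z) -> (forall z, 0 <= h z) ->
  (forall tau z, - alpha < z < beta -> g tau z = h z / sqrt (tau ^ 2 - z ^ 2)) ->
  (forall tau, alpha < tau -> beta < tau -> improper_int (g tau) (- alpha) beta (F tau)) ->
  exists L, is_improper_RInt h (- alpha) beta L /\ tends_at_pinf (fun tau => tau * F tau) L.
Proof.
  intros hab Hcont Hpos Hg HF.
  set (K := alpha ^ 2 + beta ^ 2).
  apply (tends_scaled_chord_integral h (- alpha) beta K (K + 2)); unfold K; try nra.
  - intros z hz; destruct (Rle_or_lt 0 z); nra.
  - intros c d hc hcd hd; apply ex_RInt_continuous_on; auto; intros; apply Hcont; lra.
  - intros; apply Hpos.
  - intros tau htau; apply (is_improper_RInt_ext (g tau)); [intros; now apply Hg|].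
    apply is_improper_RInt_of_improper_int, HF; nra.
Qed.

Section Periods.

Variables (alpha beta : R).
Hypothesis hsum : alpha + beta > 0.

Lemma tends_scaled_right_difference I3 J3 :
  (forall tau, alpha < tau -> beta < tau -> improper_int (g1 alpha beta tau) beta tau (I3 tau)) ->
  (forall tau, alpha < tau -> beta < tau -> improper_int (g2 alpha beta tau) beta tau (J3 tau)) ->
  exists L, is_improper_RInt_pinf (tail_kernel beta alpha) beta L /\ 0 < L /\
    tends_at_pinf (fun tau => tau * (I3 tau - J3 tau)) L.
Proof.
  intros HI HJ; apply tends_scaled_tail_integral; [lra|]; intros t ha hb.
  apply (is_improper_RInt_ext (fun z => g1 alpha beta t z - g2 alpha beta t z));
    [intros; apply g1_sub_g2_right; lra|].
  apply is_improper_RInt_minus; apply is_improper_RInt_of_improper_int; auto.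
Qed.

Lemma tends_scaled_left_difference I1 J1 :
  (forall tau, alpha < tau -> beta < tau -> improper_int (g1 alpha beta tau) (- tau) (- alpha) (I1 tau)) ->
  (forall tau, alpha < tau -> beta < tau -> improper_int (g2 alpha beta tau) (- tau) (- alpha) (J1 tau)) ->
  exists L, is_improper_RInt_pinf (tail_kernel alpha beta) alpha L /\ 0 < L /\
    tends_at_pinf (fun tau => tau * (I1 tau - J1 tau)) (- L).
Proof.
  intros HI HJ.
  destruct (tends_scaled_tail_integral alpha beta hsum (fun t => J1 t - I1 t)) as [L [HL [pL T]]].
  { intros t hb ha.
    assert (G := is_improper_RInt_opp_arg _ _ _ _ (is_improper_RInt_minus _ _ _ _ _ _
      (is_improper_RInt_of_improper_int _ _ _ _ (HJ t ha hb))
      (is_improper_RInt_of_improper_int _ _ _ _ (HI t ha hb)))).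
    rewrite !Ropp_involutive in G.
    refine (is_improper_RInt_ext _ _ _ _ _ _ G); intros x hx.
    apply g2_sub_g1_left; lra. }
  exists L; split; [|split]; auto.
  intros eps Heps; destruct (T eps Heps) as [T0 HT0]; exists T0; intros x hx.
  replace (x * (I1 x - J1 x) - - L) with (- (x * (J1 x - I1 x) - L)) by ring.
  rewrite Rabs_Ropp; now apply HT0.
Qed.

Lemma scaled_outer_periods_diverge J1 J3 :
  (forall tau, alpha < tau -> beta < tau -> improper_int (g2 alpha beta tau) (- tau) (- alpha) (J1 tau)) ->
  (forall tau, alpha < tau -> beta < tau -> improper_int (g2 alpha beta tau) beta tau (J3 tau)) ->
  diverges_pinf (fun tau => tau * (J1 tau + J3 tau)).
Proof.
  intros HJ1 HJ3 M; set (X := M + ln (3 + Rabs alpha)).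
  exists (2 * exp X + 2 * Rabs alpha + 2 + Rabs beta + 2); intros t ht.
  pose proof (Rabs_pos alpha); pose proof (Rle_abs alpha); pose proof (Rle_abs (- alpha)) as ha'.
  rewrite Rabs_Ropp in ha'; pose proof (Rabs_pos beta); pose proof (Rle_abs beta).
  pose proof (exp_pos X).
  assert (IJ1 := is_improper_RInt_of_improper_int _ _ _ _ (HJ1 t ltac:(lra) ltac:(lra))).
  assert (IJ3 := is_improper_RInt_of_improper_int _ _ _ _ (HJ3 t ltac:(lra) ltac:(lra))).
  assert (J30 : 0 <= J3 t).
  { rewrite <- (RInt_pointR (g2 alpha beta t) ((beta + t) / 2)).
    apply (RInt_le_improper _ beta t); auto; try lra; intros; apply g2_nonneg. }
  set (c := - t / 2); set (d := - Rabs alpha - 1).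
  destruct (RInt_inv_two_sub c d) as [Hex Heq]; [unfold c, d; lra | unfold d; lra|].
  assert (Hexg : ex_RInt (g2 alpha beta t) c d) by (apply (proj1 IJ1); unfold c, d; lra).
  assert (Hlog : ln (2 - c) - ln (2 - d) <= t * J1 t).
  { rewrite <- Heq; apply Rle_trans with (RInt (fun z => t * g2 alpha beta t z) c d).
    - apply RInt_le; auto; [unfold c, d; lra | now apply ex_RInt_scalR |].
      intros z hz; apply inv_two_sub_le_scaled_g2; unfold c, d in *; lra.
    - rewrite RInt_scalR by auto; apply Rmult_le_compat_l; [lra|].
      apply (RInt_le_improper _ (- t) (- alpha)); auto; unfold c, d; try lra.
      intros; apply g2_nonneg. }
  assert (ln (2 - c) > X).
  { rewrite <- (ln_exp X); apply ln_increasing; [apply exp_pos | unfold c; lra]. }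
  replace (2 - d) with (3 + Rabs alpha) in Hlog by (unfold d; ring).
  assert (0 <= t * J3 t) by (apply Rmult_le_pos; lra).
  unfold X in *; rewrite Rmult_plus_distr_l; lra.
Qed.

End Periods.

Theorem mainTheorem8 (alpha beta : R) (I1 I2 I3 J1 J2 J3 : R -> R)
  (Hab : alpha < beta) (Hsum : alpha + beta > 0)
  (HI1 : forall tau, alpha < tau -> beta < tau ->
           improper_int (g1 alpha beta tau) (- tau) (- alpha) (I1 tau))
  (HI2 : forall tau, alpha < tau -> beta < tau ->
           improper_int (g1 alpha beta tau) (- alpha) beta (I2 tau))
  (HI3 : forall tau, alpha < tau -> beta < tau ->
           improper_int (g1 alpha beta tau) beta tau (I3 tau))
  (HJ1 : forall tau, alpha < tau -> beta < tau ->
           improper_int (g2 alpha beta tau) (- tau) (- alpha) (J1 tau))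
  (HJ2 : forall tau, alpha < tau -> beta < tau ->
           improper_int (g2 alpha beta tau) (- alpha) beta (J2 tau))
  (HJ3 : forall tau, alpha < tau -> beta < tau ->
           improper_int (g2 alpha beta tau) beta tau (J3 tau)) :
  (exists LI LJ,
      improper_int (fun z => 1 / sqrt (z ^ 2 + 4) * sqrt ((alpha + z) / (beta - z)))
        (- alpha) beta LI /\
      improper_int (fun z => 1 / sqrt (z ^ 2 + 4) * sqrt ((beta - z) / (alpha + z)))
        (- alpha) beta LJ /\
      tends_at_pinf (fun tau => tau * I2 tau) LI /\
      tends_at_pinf (fun tau => tau * J2 tau) LJ /\
      LI < LJ) /\
  (exists L1 L3,
      improper_int_ninf
        (fun z => (alpha + beta) / (sqrt (z ^ 2 + 4) * sqrt (beta - z) * sqrt (- alpha - z)))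
        (- alpha) L1 /\
      improper_int_pinf
        (fun z => (alpha + beta) / (sqrt (z ^ 2 + 4) * sqrt (z - beta) * sqrt (z + alpha)))
        beta L3 /\
      tends_at_pinf (fun tau => tau * (I1 tau - J1 tau)) (- L1) /\
      tends_at_pinf (fun tau => tau * (I3 tau - J3 tau)) L3 /\
      L1 <> 0 /\ L3 <> 0) /\
  diverges_pinf (fun tau => tau * (J1 tau + J3 tau)).
Proof.
  destruct (tends_scaled_middle_period alpha beta (g1 alpha beta) (g1_reduced alpha beta) I2)
    as [LI [HLI TI]]; try lra; auto using g1_reduced_continuous, g1_reduced_nonneg, g1_eq_reduced.
  destruct (tends_scaled_middle_period alpha beta (g2 alpha beta) (g2_reduced alpha beta) J2)
    as [LJ [HLJ TJ]]; try lra; auto using g2_reduced_continuous, g2_reduced_nonneg, g2_eq_reduced.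
  destruct (tends_scaled_left_difference alpha beta Hsum I1 J1 HI1 HJ1) as [L1 [HL1 [pL1 T1]]].
  destruct (tends_scaled_right_difference alpha beta Hsum I3 J3 HI3 HJ3) as [L3 [HL3 [pL3 T3]]].
  split; [|split].
  - exists LI, LJ; split; [|split; [|split; [|split]]]; auto.
    + exact (improper_int_of_is_improper_RInt _ _ _ _ HLI).
    + exact (improper_int_of_is_improper_RInt _ _ _ _ HLJ).
    + now apply (reduced_integrals_lt alpha beta).
  - exists L1, L3; split; [|split; [|split; [|split; [|split]]]]; auto; try lra.
    + apply (improper_int_ninf_of_pinf_opp_arg (tail_kernel alpha beta)); auto.
      intros z hz; unfold tail_kernel.
      replace ((- z) ^ 2) with (z ^ 2) by ring; replace (- z - alpha) with (- alpha - z) by ring.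
      replace (- z + beta) with (beta - z) by ring; f_equal; ring.
    + rewrite Rplus_comm; now apply improper_int_pinf_of_is_improper_RInt_pinf.
  - now apply (scaled_outer_periods_diverge alpha beta).
Qed.
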